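(* The target counital subalgebra of $H_\mathcal{C}$ is $$H_t(H_\mathcal{C})=\mathrm{span}\Big\{\sum_{k,b}\frac{\sqrt{d_k}}{\sqrt{d_a}}\,e^{ab}_{k;ab}\ :\ a\in Irr(\mathcal{C})\Big\}$$ (sum over $k,b$ with $(a,k,b)$ admissible). Moreover $\dim_\mathbb{C}H_t(H_\mathcal{C})=\dim_\mathbb{C}V_\mathbf{1}$, and $H_t(H_\mathcal{C})\cong V_\mathbf{1}$ as $H_\mathcal{C}$-modules; in particular $H_t(H_\mathcal{C})$ is simple.
   Context: $\mathcal{C}$ is a unitary fusion category, multiplicity free, whose simple objects are self-dual with trivial Frobenius–Schur indicators; $Irr(\mathcal{C})$ its simple objects, $d_a$ quantum dimensions, $(a,b,c)$ admissible iff $\mathrm{Hom}(a\otimes b,c)\ne0$; unitary $F$-symbols $F^{abc}_{d;nm}$ with trivalent vertices normalized so that $\theta(a,b,c)=\sqrt{d_ad_bd_c}$. $H_\mathcal{C}$ has basis $e^{ab}_{i;cd}$ ($(a,i,b)$, $(i,d,c)$ admissible), multiplication $e^{ab}_{i;cd}e^{a'b'}_{i';c'd'}=\frac{\delta_{c,a'}\delta_{d,b'}\delta_{i,i'}}{\sqrt{d_i}}e^{ab}_{i;c'd'}$, unit $\eta=\sum_{a,b,i}\sqrt{d_i}e^{ab}_{i;ab}$, counit $\varepsilon(e^{ab}_{i;cd})=\delta_{a,b}\delta_{c,d}\delta_{i,\mathbf{1}}$, comultiplication $\Delta(e^{ab}_{i;cd})=\sum_{j,k,p,q}\frac{\sqrt{d_jd_k}}{\sqrt{d_i}}F^{ajk}_{b;ip}F^{dkj}_{c;iq}e^{ap}_{j;cq}\otimes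 e^{pb}_{k;qd}$, antipode $S(e^{ab}_{i;cd})=\frac{\sqrt{d_bd_c}}{\sqrt{d_ad_d}}e^{dc}_{i;ba}$. The target counital map is $\varepsilon_t(h)=\varepsilon(\eta_{(1)}h)\eta_{(2)}$ and $H_t(H_\mathcal{C})=\varepsilon_t(H_\mathcal{C})$, an $H_\mathcal{C}$-module via $h\cdot z=\varepsilon_t(hz)$. For $i\in Irr(\mathcal{C})$, $V_i$ is the $H_\mathcal{C}$-module with basis $v^{ab}_i$ ($(a,i,b)$ admissible) and action $e^{ab}_{j;cd}\cdot v^{pq}_i=\frac{\delta_{i,j}\delta_{c,p}\delta_{d,q}}{\sqrt{d_i}}v^{ab}_i$. *)

From HB Require Import structures.
From mathcomp Require Import all_boot all_order all_algebra.
From mathcomp Require Import reals complex.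
Set Implicit Arguments.
Unset Strict Implicit.
Unset Printing Implicit Defensive.
Import Order.TTheory GRing.Theory Num.Theory.
Local Open Scope ring_scope.

(* Skeletal data of a multiplicity-free fusion category over C = R[i]:       *)
(*   lab        = Irr(C) (finite),  unitob = the unit object 1,                 *)
(*   adm a b c  <=> Hom(a (x) b, c) <> 0,                                    *)
(*   Fsym a b c d n m = F^{abc}_{d;nm}, where n labels the channel of b(x)c  *)
(*   (tree a(x)(b(x)c) -> a(x)n -> d) and m the channel of a(x)b             *)
(*   (tree (a(x)b)(x)c -> m(x)c -> d); this is the convention forced by the   *)
(*   comultiplication formula of H_C.                                        *)
Record fusion_data (R : realType) := FusionData {
  lab : finType;
  unitob : lab;
  adm : lab -> lab -> lab -> bool;
  qdim : lab -> R;
  Fsym : lab -> lab -> lab -> lab -> lab -> lab -> R[i] }.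

Arguments unitob {R} f.
Arguments adm {R} f.
Arguments qdim {R} f.
Arguments Fsym {R} f.

(* The axioms satisfied by the data of a unitary, multiplicity-free fusion
   category whose simple objects are self-dual with trivial Frobenius-Schur
   indicators, in the gauge where theta(a,b,c) = sqrt(d_a d_b d_c). *)
Definition is_UFC (R : realType) (U : fusion_data R) : Prop :=
  let F := Fsym U in let N := adm U in let d := qdim U in let o := unitob U in
  [/\
   [/\ (* self-duality: admissibility is fully symmetric; unit object *)
   (forall a b c, N a b c = N b a c) /\ (forall a b c, N a b c = N a c b),
   (forall a b, N o a b = (a == b)) &
   [/\ (forall a, 0 < d a), d o = 1 &
       forall a b, d a * d b = \sum_(c : lab U) (N a b c)%:R * d c]],
   (forall a b c e n m, F a b c e n m != 0 ->
       [&& N b c n, N a n e, N a b m & N m c e]),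
   (* unitarity of each F-matrix (rows n, columns m) *)
   (forall a b c e n n', N b c n -> N a n e -> N b c n' -> N a n' e ->
       \sum_(m : lab U | N a b m && N m c e) F a b c e n m * (F a b c e n' m)^*
         = (n == n')%:R) /\
   (forall a b c e m m', N a b m -> N m c e -> N a b m' -> N m' c e ->
       \sum_(n : lab U | N b c n && N a n e) (F a b c e n m)^* * F a b c e n m'
         = (m == m')%:R),
   [/\ (forall b c e, N b c e -> F o b c e e b = 1),
       (forall a c e, N a c e -> F a o c e c a = 1) &
       (forall a b e, N a b e -> F a b o e b e = 1)] /\
   (* pentagon equation *)
   (forall a b c d' e f g k l,
       N a b f -> N f c g -> N g d' e -> N c d' l -> N b l k -> N a k e ->
       F f c d' e l g * F a b l e k f
         = \sum_(h : lab U) F a b c g h f * F a h d' e k g * F b c d' k l h)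
  & (* trivial Frobenius-Schur indicators / normalization: F^{aaa}_{a;11} = 1/d_a *)
   (forall a, F a a a a o o = Complex (d a)^-1 0)].

Section HC.
Variables (R : realType) (U : fusion_data R).
Local Notation C := (R[i]).
Local Notation L := (lab U).

Definition sd (a : L) : C := Complex (Num.sqrt (qdim U a)) 0.

Definition tup5 := (L * L * L * L * L)%type.
Definition ta (t : tup5) : L := t.1.1.1.1.
Definition tb (t : tup5) : L := t.1.1.1.2.
Definition ti (t : tup5) : L := t.1.1.2.
Definition tc (t : tup5) : L := t.1.2.
Definition td (t : tup5) : L := t.2.

(* e^{ab}_{i;cd} exists iff (a,i,b) and (i,d,c) are admissible *)
Definition admH (t : tup5) : bool :=
  adm U (ta t) (ti t) (tb t) && adm U (ti t) (td t) (tc t).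
Definition Hidx := {t : tup5 | admH t}.

Definition HC := {ffun Hidx -> C^o}.

(* basis vector e^{ab}_{i;cd} (the zero vector if the tuple is not admissible) *)
Definition eH (t : tup5) : HC := [ffun x : Hidx => ((val x == t)%:R : C^o)].

Definition mulH (h g : HC) : HC :=
  \sum_(x : Hidx) \sum_(y : Hidx)
    (h x * g y) *:
      (if [&& tc (val x) == ta (val y), td (val x) == tb (val y)
             & ti (val x) == ti (val y)]
       then (sd (ti (val x)))^-1 *:
              eH ((((ta (val x), tb (val x)), ti (val x)), tc (val y)), td (val y))
       else 0).

Definition etaH : HC :=
  \sum_(x : Hidx | (ta (val x) == tc (val x)) && (tb (val x) == td (val x)))
     sd (ti (val x)) *: eH (val x).

Definition epsH (h : HC) : C :=
  \sum_(x : Hidx) h x *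
    ((ta (val x) == tb (val x)) && (tc (val x) == td (val x))
     && (ti (val x) == unitob U))%:R.

(* coefficient of e_y (x) e_z in Delta(e_x) *)
Definition dcoef (x y z : Hidx) : C :=
  let x := val x in let y := val y in let z := val z in
  if [&& ta y == ta x, tc y == tc x, tb z == tb x, td z == td x,
         ta z == tb y & tc z == td y]
  then sd (ti y) * sd (ti z) / sd (ti x)
       * Fsym U (ta x) (ti y) (ti z) (tb x) (ti x) (tb y)
       * Fsym U (td x) (ti z) (ti y) (tc x) (ti x) (td y)
  else 0.

(* comultiplication; H (x) H is identified with functions on Hidx * Hidx *)
Definition DeltaH (h : HC) : {ffun Hidx * Hidx -> C} :=
  [ffun yz => \sum_(x : Hidx) h x * dcoef x yz.1 yz.2].

(* target counital map eps_t(h) = eps(eta_(1) h) eta_(2) *)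
Definition epst (h : HC) : HC :=
  \sum_(yz : Hidx * Hidx)
     (DeltaH etaH yz * epsH (mulH (eH (val yz.1)) h)) *: eH (val yz.2).

Definition Vidx (i : L) := {p : L * L | adm U p.1 i p.2}.
Definition VM (i : L) := {ffun Vidx i -> C^o}.
Definition eV (i : L) (p : L * L) : VM i :=
  [ffun y : Vidx i => ((val y == p)%:R : C^o)].
Definition actV (i : L) (h : HC) (v : VM i) : VM i :=
  \sum_(x : Hidx) \sum_(y : Vidx i)
    (h x * v y) *:
      (if [&& ti (val x) == i, tc (val x) == (val y).1 & td (val x) == (val y).2]
       then (sd i)^-1 *: eV i (ta (val x), tb (val x))
       else 0).

Definition tvec (a : L) : HC :=
  \sum_(x : Hidx | [&& ta (val x) == a, tc (val x) == a & tb (val x) == td (val x)])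
     (sd (ti (val x)) / sd a) *: eH (val x).

Definition HtSpan : {vspace HC} := <<[seq tvec a | a <- enum L]>>%VS.

Definition Ht_iso_V1 : Prop :=
  exists f : VM (unitob U) -> HC,
    [/\ forall (c : C) u v, f (c *: u + v) = c *: f u + f v,
        injective f,
        (forall h, h \in HtSpan <-> exists v, h = f v)
      & forall h v, f (actV h v) = epst (mulH h (f v))].

Definition Ht_simple : Prop :=
  HtSpan != 0%VS /\
  forall W : {vspace HC}, (W <= HtSpan)%VS ->
    (forall h w, w \in W -> epst (mulH h w) \in W) ->
    W = 0%VS \/ W = HtSpan.

End HC.

From HB Require Import structures.
From mathcomp Require Import all_boot all_order all_algebra.
From mathcomp Require Import reals complex.
From mathcomp Require Import ring.
Import Order.TTheory GRing.Theory Num.Theory.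
Local Open Scope ring_scope.

(* Both H_t and V_1 are parametrized by functions c : Irr(C) -> C: V_1 has the basis v^{aa}_1,
   and H_t consists of the vectors [htvec c] with coordinate c a sqrt(d_k) on e^{ab}_{k;ab}.
   In eps_t(g) = eps(eta_(1) g) eta_(2), the counit only sees the legs e^{aa}_{1;cc} of
   Delta(eta); by the unit axioms the F-symbols on these legs are 1, and what survives is
   eps_t g = htvec (htcoord g), with htcoord g a the coefficient sum of g on the e^{aa}_{1;cd}.
   So H_t is the image of htvec, the map V_1 -> H_t with the same coordinates intertwines the
   two actions, and H_t is simple because e^{aa}_{1;bb} . htvec c = c b htvec (delta_a). *)

Lemma regular_scaleE (K : pzSemiRingType) (x y : K^o) : x *: y = x * y.
Proof. by []. Qed.

Lemma sum_dirac {K : pzSemiRingType} {T : finType} (P : pred T) (G : T -> K) x :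
  \sum_(y | P y) G y * (x == y)%:R = if P x then G x else 0.
Proof.
case: ifP => Px; last first.
  by apply: big1 => y Py; case: eqP => [xy | _]; [rewrite xy Py in Px | rewrite mulr0].
rewrite (big_only1 x) ?eqxx ?mulr1 // => y /negPf.
by rewrite eq_sym => ->; rewrite mulr0.
Qed.

Lemma sum_sig_dirac {K : pzSemiRingType} {T : finType} (A Q : pred T) (G : T -> K) t :
  \sum_(x : {x | A x} | Q (val x)) G (val x) * (val x == t)%:R
    = if A t && Q t then G t else 0.
Proof.
case: (boolP (A t)) => At /=; last first.
  apply: big1 => x _; case: eqP => [xt | _]; last by rewrite mulr0.
  by move: At; rewrite -xt (valP x).
have /= <- := sum_dirac (fun x : {x | A x} => Q (val x)) (G \o val) (exist A t At).
by apply: eq_bigr => x _; rewrite -val_eqE eq_sym.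
Qed.

Lemma sum_sig_pred1 {K : pzSemiRingType} {T : finType} (A Q : pred T) t :
  \sum_(x : {x | A x} | Q (val x)) (val x == t)%:R = (A t && Q t)%:R :> K.
Proof.
have := sum_sig_dirac A Q (fun=> (1 : K)) t; under eq_bigr do rewrite mul1r.
by move=> ->; case: (A t && Q t).
Qed.

Section TargetCounitalSubalgebra.
Variables (R : realType) (U : fusion_data R).
Hypothesis UFC : is_UFC U.
Local Notation C := (R[i]).
Local Notation L := (lab U).
Local Notation o := (unitob U).
Local Notation N := (adm U).
Local Notation F := (Fsym U).
Local Notation Hidx := (Hidx U).

Local Arguments ta [R U] !t /.
Local Arguments tb [R U] !t /.
Local Arguments ti [R U] !t /.
Local Arguments tc [R U] !t /.
Local Arguments td [R U] !t /.

Lemma admC a b c : N a b c = N b a c.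
Proof. by case: UFC => [[[? _] _ _] _ _ _ _]. Qed.
Lemma adm_swap23 a b c : N a b c = N a c b.
Proof. by case: UFC => [[[_ ?] _ _] _ _ _ _]. Qed.
Lemma adm1l a b : N o a b = (a == b).
Proof. by case: UFC => [[_ ? _] _ _ _ _]. Qed.
Lemma qdim_gt0 a : 0 < qdim U a.
Proof. by case: UFC => [[_ _ [? _ _]] _ _ _ _]. Qed.
Lemma qdim1 : qdim U o = 1.
Proof. by case: UFC => [[_ _ [_ ? _]] _ _ _ _]. Qed.
Lemma Fsym_neq0_adm a b c e n m : F a b c e n m != 0 -> N b c n.
Proof. by case: UFC => [_ H _ _ _] /H /andP[]. Qed.
Lemma Fsym1_mid a c e : N a c e -> F a o c e c a = 1.
Proof. by case: UFC => [_ _ _ [[_ H _] _] _]; apply: H. Qed.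
Lemma Fsym1_right a b e : N a b e -> F a b o e b e = 1.
Proof. by case: UFC => [_ _ _ [[_ _ H] _] _]; apply: H. Qed.

Lemma sd1 : sd o = 1.
Proof. by rewrite /sd qdim1 sqrtr1. Qed.
Lemma sd_neq0 (a : L) : sd a != 0.
Proof. by apply/eqP => -[] /eqP; rewrite sqrtr_eq0 leNgt qdim_gt0. Qed.

Lemma Hidx_unit_channel (x : Hidx) : ti (val x) = o -> td (val x) = tc (val x).
Proof. by case: x => t /= /andP[_]; rewrite /admH => + eo; rewrite eo adm1l => /eqP. Qed.

Lemma unitH_adm a : admH ((((a, a), o), a), a).
Proof. by rewrite /admH /= admC !adm1l eqxx. Qed.
Definition unitH a : Hidx := exist _ ((((a, a), o), a), a) (unitH_adm a).

Lemma unitV_adm a : N (a, a).1 o (a, a).2.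
Proof. by rewrite /= admC adm1l. Qed.
Definition unitV a : Vidx o := exist _ (a, a) (unitV_adm a).

Lemma unitV_fst (y : Vidx o) : y = unitV (val y).1.
Proof.
case: y => -[a b] /= ab; apply: val_inj => /=.
by move: ab; rewrite /= admC adm1l => /eqP ->.
Qed.

Lemma card_Vidx1 : #|{: Vidx o}| = #|L|.
Proof.
apply/esym/(bij_eq_card (f := unitV)).
by exists (fun y => (val y).1) => [// | y]; rewrite -unitV_fst.
Qed.

Lemma eHE t (x : Hidx) : eH t x = (val x == t)%:R.
Proof. by rewrite ffunE. Qed.

Lemma tvecE a (x : Hidx) : tvec a x =
  if [&& ta (val x) == a, tc (val x) == a & tb (val x) == td (val x)]
  then sd (ti (val x)) / sd a else 0.
Proof.
rewrite /tvec sum_ffunE; under eq_bigr do rewrite ffunE eHE val_eqE.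
by rewrite sum_dirac.
Qed.

Lemma etaHE (x : Hidx) : etaH U x =
  if (ta (val x) == tc (val x)) && (tb (val x) == td (val x))
  then sd (ti (val x)) else 0.
Proof.
rewrite /etaH sum_ffunE; under eq_bigr do rewrite ffunE eHE val_eqE.
by rewrite sum_dirac.
Qed.

Definition composable (x y : tup5 U) : bool :=
  [&& tc x == ta y, td x == tb y & ti x == ti y].
Definition compose (x y : tup5 U) : tup5 U := ((((ta x, tb x), ti x), tc y), td y).
Local Arguments composable !x !y /.
Local Arguments compose !x !y /.

Lemma mulHE h g (z : Hidx) : mulH h g z =
  \sum_(x : Hidx) \sum_(y : Hidx) (composable (val x) (val y))%:R / sd (ti (val x))
    * h x * g y * (val z == compose (val x) (val y))%:R.
Proof.
rewrite /mulH sum_ffunE; apply: eq_bigr => x _; rewrite sum_ffunE.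
apply: eq_bigr => y _; rewrite ffunE regular_scaleE /composable.
case: ifP => _; last by rewrite ffunE !mul0r mulr0.
by rewrite ffunE regular_scaleE eHE mul1r mulrCA !mulrA.
Qed.

Lemma mul_eHE (y : Hidx) g (z : Hidx) : mulH (eH (val y)) g z =
  \sum_(x : Hidx) (composable (val y) (val x))%:R / sd (ti (val y))
    * g x * (val z == compose (val y) (val x))%:R.
Proof.
rewrite mulHE (big_only1 y) //; last first.
  by move=> x /negPf xy _; apply: big1 => x' _; rewrite eHE val_eqE xy !(mulr0, mul0r).
by apply: eq_bigr => x _; rewrite eHE eqxx mulr1.
Qed.

(* The factor sqrt(d_a) makes [htvec c] take the value [c a] on e^{aa}_{1;aa}. *)
Definition htvec (c : L -> C) : HC U := \sum_a (c a * sd a) *: tvec a.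

Lemma htvecE c (x : Hidx) : htvec c x =
  if (ta (val x) == tc (val x)) && (tb (val x) == td (val x))
  then c (ta (val x)) * sd (ti (val x)) else 0.
Proof.
rewrite /htvec sum_ffunE; under eq_bigr do rewrite ffunE tvecE regular_scaleE.
rewrite (big_only1 (ta (val x))) //; last first.
  by move=> a /negPf ax _; rewrite eq_sym ax mulr0.
rewrite eqxx /= [tc _ == _]eq_sym; case: ifP => _; last by rewrite mulr0.
by field; apply: sd_neq0.
Qed.

Lemma htvec_unitH c a : htvec c (unitH a) = c a.
Proof. by rewrite htvecE /= !eqxx sd1 mulr1. Qed.

Lemma eq_htvec {c c'} : c =1 c' -> htvec c = htvec c'.
Proof. by move=> cc'; apply: eq_bigr => a _; rewrite cc'. Qed.

Lemma htvecDZ k c c' : htvec (fun a => k * c a + c' a) = k *: htvec c + htvec c'.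
Proof.
apply/ffunP => x; rewrite !ffunE !htvecE regular_scaleE.
by case: ifP => _; rewrite ?mulr0 ?addr0 // mulrDl mulrA.
Qed.

Lemma htvec0 : htvec (fun=> 0) = 0.
Proof. by apply/ffunP => x; rewrite !ffunE htvecE mul0r if_same. Qed.

Lemma htvecZ k c : htvec (fun a => k * c a) = k *: htvec c.
Proof. by rewrite -[RHS]addr0 -htvec0 -htvecDZ; apply: eq_htvec => a; rewrite addr0. Qed.

Lemma tvec_htvec a : tvec a = htvec (fun b => (b == a)%:R / sd a).
Proof.
apply/ffunP => x; rewrite htvecE tvecE.
case: x => -[[[[a1 b1] i1] c1] d1] /= _.
case: (a1 =P a) => [-> | _] /=; last by rewrite !mul0r if_same.
by rewrite [a == c1]eq_sym mul1r mulrC.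
Qed.

Lemma htvec_sum c : htvec c = \sum_a c a *: htvec (fun b => (b == a)%:R).
Proof.
apply/ffunP => x; rewrite htvecE sum_ffunE.
under eq_bigr do rewrite ffunE htvecE regular_scaleE.
case: ifP => _; last by rewrite big1 // => a _; rewrite mulr0.
by under eq_bigr do rewrite mulrA; rewrite -mulr_suml sum_dirac.
Qed.

Lemma tvec_in a : tvec a \in HtSpan U.
Proof. by apply: memv_span; apply: map_f; rewrite mem_enum. Qed.

Lemma htvec_in c : htvec c \in HtSpan U.
Proof. by apply: memv_suml => a _; apply: memvZ; apply: tvec_in. Qed.

Lemma mem_HtSpan h : h \in HtSpan U <-> exists c, h = htvec c.
Proof.
split => [|[c ->]]; last exact: htvec_in.
rewrite /HtSpan span_def big_map big_enum /= => /memv_sumP[vs vsP ->].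
apply: (big_ind (fun h => exists c, h = htvec c)).
- by exists (fun=> 0); rewrite htvec0.
- move=> _ _ [c1 ->] [c2 ->]; exists (fun a => 1 * c1 a + c2 a).
  by rewrite htvecDZ scale1r.
move=> a _; have /vlineP[k ->] := vsP a isT.
exists (fun b => k * ((b == a)%:R / sd a) + 0).
by rewrite htvecDZ htvec0 addr0 tvec_htvec.
Qed.

Lemma free_tvec : free [seq tvec a | a <- enum L].
Proof.
pose X := in_tuple [seq tvec a | a <- enum L].
have X_L (j : 'I_(size X)) : (j < size (enum L))%N by rewrite -(size_map (@tvec R U)) ltn_ord.
suff: free X by []; apply/freeP => k k0 i.
have := congr1 (fun h : HC U => h (unitH (nth o (enum L) i))) k0.
rewrite sum_ffunE ffunE.
under eq_bigr => j _ do rewrite ffunE regular_scaleE (nth_map o) ?X_L // tvecE.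
rewrite (big_only1 i) //= ?eqxx ?sd1 => [/eqP|j ji _]; last first.
  case: ifP => [/andP[/eqP ij _] | _]; last by rewrite mulr0.
  by move: ji; rewrite -(inj_eq val_inj) /= -(nth_uniq o (X_L j) (X_L i) (enum_uniq L)) ij eqxx.
by rewrite mul1r mulf_eq0 invr_eq0 (negPf (sd_neq0 _)) orbF => /eqP.
Qed.

Lemma dim_HtSpan : \dim (HtSpan U) = #|L|.
Proof. by move/eqP: free_tvec; rewrite size_map -cardE. Qed.

Definition is_aa1 a (t : tup5 U) : bool := [&& ta t == a, tb t == a & ti t == o].
Local Arguments is_aa1 a !t /.

Lemma is_aa1_compose a x y : is_aa1 a (compose x y) = is_aa1 a x.
Proof. by []. Qed.

Definition htcoord (g : HC U) (a : L) : C := \sum_(x : Hidx | is_aa1 a (val x)) g x.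

Lemma htcoord_htvec c : htcoord (htvec c) =1 c.
Proof.
move=> a; rewrite /htcoord (big_only1 (unitH a)) ?htvec_unitH // => [|y ya].
  by rewrite /is_aa1 /= !eqxx.
case: y ya => -[[[[a1 b1] i1] c1] d1] y_adm ya /and3P[/= /eqP ea /eqP eb /eqP ei].
rewrite htvecE /=; case: ifP => [/andP[/eqP ec /eqP ed] | _] //.
by move: ya; rewrite -(inj_eq val_inj) /= -ec -ed ea eb ei eqxx.
Qed.

Lemma eps_mul_eH (y : Hidx) g : epsH (mulH (eH (val y)) g) =
  ((ti (val y) == o) && (ta (val y) == tb (val y)))%:R * htcoord g (tc (val y)).
Proof.
rewrite /epsH; under eq_bigr do rewrite mul_eHE mulr_suml.
rewrite exchange_big /= /htcoord [in RHS]big_mkcond /= mulr_sumr; apply: eq_bigr => x _.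
case: y x => -[[[[a b] i] c] d] yadm [[[[[a' b'] i'] c'] d'] xadm] /=.
have /andP[/= aib /= idc] := yadm; have /andP[/= a'i'b' /= i'd'c'] := xadm.
have [/and3P[/eqP ea' /eqP eb' /eqP ei'] | ncond] := boolP [&& c == a', d == b' & i == i'];
    last first.
  rewrite big1 => [| z _]; last by rewrite !mul0r.
  case: (i =P o) => [io | _]; last by rewrite mul0r.
  move: idc; rewrite io adm1l => /eqP dc.
  case: ifP => [/and3P[/eqP ea /eqP eb /eqP ei] | _]; last by rewrite mulr0.
  by rewrite ea eb ei dc io !eqxx in ncond.
subst; under eq_bigr do rewrite mulrAC.
pose delta (t : tup5 U) : C := ((ta t == tb t) && (tc t == td t) && (ti t == o))%:R.
rewrite (sum_sig_dirac _ predT (fun t => _ * delta t)) /admH /= aib i'd'c' /delta /= !eqxx.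
case: (i' =P o) => [io | _]; last by rewrite andbF mulr0 mul0r.
rewrite io !adm1l in idc i'd'c'.
by rewrite [c' == d']eq_sym idc i'd'c' [in sd i']io sd1 invr1 !mul1r mulrC !andbT.
Qed.

Lemma DeltaH_eta_support (y w : Hidx) : ti (val y) = o -> ta (val y) = tb (val y) ->
  DeltaH (etaH U) (y, w) != 0 -> y = unitH (ta (val w)).
Proof.
move=> yo yab; rewrite ffunE /=.
have [x nzx _ | all0] := pickP (fun x => etaH U x * dcoef x y w != 0); last first.
  by rewrite big1 ?eqxx // => x _; apply/eqP; rewrite -[_ == _]negbK all0.
apply: val_inj; move: nzx; rewrite etaHE /dcoef /=.
case: ifP => [/andP[/eqP xac _] | _]; last by rewrite mul0r eqxx.
case: ifP => [/and5P[/eqP yax /eqP ycx _ _ /andP[/eqP way _]] | _]; last by rewrite mulr0 eqxx.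
move=> _; have := Hidx_unit_channel y yo.
move: yo yab ycx yax way; case: y => [[[[[a b] i] c] d] _] /= -> <- -> -> -> ->.
by rewrite xac.
Qed.

Lemma DeltaH_eta_unitH a (w : Hidx) : DeltaH (etaH U) (unitH a, w) =
  [&& ta (val w) == a, tc (val w) == a & tb (val w) == td (val w)]%:R * sd (ti (val w)).
Proof.
rewrite ffunE /= (big_only1 w) //=; last first.
  move=> x; rewrite -(inj_eq val_inj) etaHE /dcoef /= => nxw _.
  case: ifP => _; last by rewrite mul0r.
  case: ifP => [/and5P[/eqP xa /eqP xc /eqP wbx /eqP wdx /andP[/eqP wa /eqP wc]] | _];
    last by rewrite mulr0.
  have [-> | /Fsym_neq0_adm] :=
    eqVneq (F (ta (val x)) o (ti (val w)) (tb (val x)) (ti (val x)) a) 0.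
    by rewrite !(mulr0, mul0r).
  rewrite adm1l => /eqP wix; case/negP: nxw; apply/eqP.
  case: x w xa xc wbx wdx wa wc wix => [[[[[? ?] ?] ?] ?] _] [[[[[? ?] ?] ?] ?] _] /=.
  by move=> <- <- -> -> -> -> ->.
rewrite etaHE /dcoef /=; case: w => -[[[[a' b'] k] c'] d'] /= /andP[/= + _].
have [-> | _] := eqVneq a' a; last by rewrite /= mulr0 mul0r.
have [-> | _] := eqVneq c' a; last by rewrite /= mulr0 mul0r.
have [-> akd | _] := eqVneq b' d'; last by rewrite /= !mul0r.
have d'ka : N d' k a by rewrite admC adm_swap23 admC.
rewrite !eqxx /= Fsym1_mid // Fsym1_right // sd1 !mulr1 mul1r mulrC.
by field; apply: sd_neq0.
Qed.

Lemma epst_htvec g : epst g = htvec (htcoord g).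
Proof.
apply/ffunP => x; rewrite htvecE /epst sum_ffunE.
under eq_bigr do rewrite ffunE regular_scaleE eHE val_eqE.
rewrite (big_only1 (unitH (ta (val x)), x)) //=; last first.
  move=> [y z] /=; rewrite xpair_eqE => nyz _.
  have [zx | _] := eqVneq z x; last by rewrite mulr0.
  move: nyz; rewrite zx eqxx andbT => ny.
  rewrite eps_mul_eH; case: andP => [[/eqP yo /eqP yab] | _]; last by rewrite mul0r mulr0 mul0r.
  have /eqP -> : DeltaH (etaH U) (y, x) == 0.
    by apply: contraNT ny => /(DeltaH_eta_support y x yo yab) ->.
  by rewrite !mul0r.
rewrite DeltaH_eta_unitH (eps_mul_eH (unitH _)) /= !eqxx [tc _ == _]eq_sym /=.
by case: ifP => _; rewrite ?mul0r // !mul1r mulr1 mulrC.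
Qed.

Definition act1 (h : HC U) (c : L -> C) (a : L) : C :=
  \sum_(x : Hidx | is_aa1 a (val x)) h x * c (tc (val x)).

Lemma htcoord_mul_htvec h c : htcoord (mulH h (htvec c)) =1 act1 h c.
Proof.
move=> a; rewrite /htcoord /act1; under eq_bigr do rewrite mulHE.
rewrite exchange_big [RHS]big_mkcond; apply: eq_bigr => x _.
rewrite exchange_big.
under eq_bigr do rewrite -mulr_sumr sum_sig_pred1 is_aa1_compose.
case: ifP => [/and3P[/eqP xa /eqP xb /eqP xo] | _]; last first.
  by rewrite big1 // => y _; rewrite andbF mulr0.
have xdc := Hidx_unit_channel x xo.
rewrite (big_only1 (unitH (tc (val x)))) // => [|y ny _].
  rewrite htvec_unitH /composable /admH /= xo xdc adm1l !eqxx /= andbT.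
  by rewrite xa xb admC adm1l eqxx sd1 divr1 mul1r mulr1.
rewrite htvecE /composable.
case: and3P => [[/eqP xya /eqP xyb /eqP xyi] | _]; last by rewrite !mul0r.
case: ifP => [/andP[/eqP yac /eqP ybd] | _]; last by rewrite mulr0 mul0r.
case/eqP: ny; apply: val_inj; move: yac ybd xya xyb xyi; rewrite xdc xo.
by case: y => -[[[[? ?] ?] ?] ?] _ /= -> -> <- <- <-.
Qed.

Lemma actV_unitV h v a : actV h v (unitV a) = act1 h (fun b => v (unitV b)) a.
Proof.
rewrite /actV /act1 sum_ffunE [RHS]big_mkcond; apply: eq_bigr => x _.
rewrite sum_ffunE; under eq_bigr => y _.
  rewrite ffunE regular_scaleE (fun_if (fun f : VM o => f (unitV a))) !ffunE regular_scaleE.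
  over.
rewrite /is_aa1 /=; case: (ti (val x) =P o) => [xo | _]; last first.
  by rewrite !andbF big1 // => y _; rewrite mulr0.
rewrite (Hidx_unit_channel x xo) (big_only1 (unitV (tc (val x)))) //= => [|y ny _].
  rewrite sd1 invr1 mul1r xpair_eqE [a == ta _]eq_sym [a == tb _]eq_sym andbT !eqxx.
  by case: ifP => _; rewrite ?mulr1 ?mulr0.
case: ifP => [/andP[/eqP y1 _] | _]; last by rewrite mulr0.
by rewrite [y]unitV_fst -y1 eqxx in ny.
Qed.

Lemma act1_aa1 a b c : act1 (eH ((((a, a), o), b), b)) c =1 (fun a' => (a' == a)%:R * c b).
Proof.
move=> a'; rewrite /act1; under eq_bigr do rewrite eHE mulrC.
rewrite (sum_sig_dirac _ (is_aa1 a') (fun t => c (tc t))) /admH /= admC !adm1l !eqxx /=.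
by rewrite andbT andbb eq_sym; case: eqP; rewrite ?mul1r ?mul0r.
Qed.

Lemma HtSpan_epst h : h \in HtSpan U <-> exists g, h = epst g.
Proof.
split=> [/mem_HtSpan[c ->] | [g ->]].
  by exists (htvec c); rewrite epst_htvec (eq_htvec (htcoord_htvec c)).
by apply/mem_HtSpan; exists (htcoord g); rewrite epst_htvec.
Qed.

Lemma dim_HtSpan_V1 : \dim (HtSpan U) = \dim (fullv : {vspace VM o}).
Proof. by rewrite dim_HtSpan dimvf /dim /= card_Vidx1 muln1. Qed.

Definition V1_to_Ht (v : VM o) : HC U := htvec (fun a => v (unitV a)).

Lemma HtSpan_iso_V1 : Ht_iso_V1 U.
Proof.
exists V1_to_Ht; split.
- by move=> k u v; rewrite -htvecDZ; apply: eq_htvec => a; rewrite !ffunE.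
- move=> u v uv; apply/ffunP => y; rewrite [y]unitV_fst.
  by have := congr1 (fun h : HC U => h (unitH (val y).1)) uv; rewrite !htvec_unitH.
- move=> h; split=> [/mem_HtSpan[c ->] | [v ->]]; last exact: htvec_in.
  by exists [ffun y : Vidx o => (c (val y).1 : C^o)]; apply: eq_htvec => a; rewrite ffunE.
- move=> h v; rewrite epst_htvec; apply: eq_htvec => a.
  by rewrite actV_unitV htcoord_mul_htvec.
Qed.

Lemma HtSpan_simple : Ht_simple U.
Proof.
split.
  apply/eqP => Ht0; have := htvec_in (fun=> 1); rewrite Ht0 memv0 => /eqP.
  move/(congr1 (fun h : HC U => h (unitH o))).
  by rewrite htvec_unitH ffunE => /eqP; rewrite oner_eq0.
move=> W sub_W stable_W; have [-> | nzW] := eqVneq W 0%VS; [by left | right].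
have /mem_HtSpan[c wc] := subvP sub_W _ (memv_pick W).
have [b cb | c0] := pickP (fun b => c b != 0); last first.
  move: nzW; rewrite -vpick0 wc (@eq_htvec c (fun=> 0)) ?htvec0 ?eqxx // => a.
  by apply/eqP/negbFE/c0.
have delta_in_W a : htvec (fun a' => (a' == a)%:R) \in W.
  have := stable_W (eH ((((a, a), o), b), b)) _ (memv_pick W).
  rewrite wc epst_htvec (eq_htvec (htcoord_mul_htvec _ _)) (eq_htvec (act1_aa1 _ _ _)).
  rewrite (@eq_htvec _ (fun a' => c b * (a' == a)%:R)) => [|a']; last exact: mulrC.
  by rewrite htvecZ => /(memvZ (c b)^-1); rewrite scalerA mulVf // scale1r.
apply/eqP; rewrite eqEsubv sub_W /=; apply/subvP => h /mem_HtSpan[c' ->].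
by rewrite htvec_sum; apply: memv_suml => a _; apply: memvZ.
Qed.

End TargetCounitalSubalgebra.

Theorem mainTheorem8 (R : realType) (U : fusion_data R) :
  is_UFC U ->
  [/\ (forall h : HC U, h \in HtSpan U <-> exists g : HC U, h = epst g),
      \dim (HtSpan U) = \dim (fullv : {vspace VM (unitob U)}),
      Ht_iso_V1 U
    & Ht_simple U].
Proof.
move=> UFC; split.
- exact: HtSpan_epst.
- exact: dim_HtSpan_V1.
- exact: HtSpan_iso_V1.
- exact: HtSpan_simple.
Qed.
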